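(* $\displaystyle\lim_{n\to\infty}\frac{l(2n+1)}{l(2n)}=5.$
   Context: For $n\ge 0$, $c(n)=\sum_{i=0}^{n}\left(\binom{n}{i}\bmod 2\right)2^{i}$, the integer whose binary digits form the $n$-th row of Pascal's triangle modulo $2$ (so $c(0),c(1),\dots=1,3,5,15,17,51,85,255,\dots$); one has $c(2n)\equiv1\pmod4$, and $l(n)=\frac{c(2n)-1}{4}$. (Stated in the paper as a conjecture of R. Stephan and proved there.) *)

From mathcomp Require Import all_boot.
From Stdlib Require Import Reals.

Definition c (n : nat) : nat := \sum_(0 <= i < n.+1) ('C(n, i) %% 2) * 2 ^ i.

(* l(n) = (c(2n) - 1)/4  (exact since c(2n) = 1 mod 4) *)
Definition l (n : nat) : nat := (c (2 * n) - 1) %/ 4.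

(* Every odd entry of row 4n of Pascal's triangle sits at a multiple of 4
   (because 4 | i 'C(4n, i)), so row 4n + 2 of Pascal's triangle mod 2 is
   row 4n plus row 4n shifted by two places, with no overlap of ones.  Read in
   binary this gives c(4n+2) = 5 c(4n), and also c(4n) = 1 mod 4.  Hence
   l(2n+1) = 5 l(2n) + 1, and since l(2n) >= n the ratio tends to 5. *)
From Pilot Require Import Defs.
From mathcomp Require Import all_boot.
From Stdlib Require Import Reals Lra.
From mathcomp Require Import zify.
Import ssrnat.

Lemma dvdn_bin_odd k n i : odd 'C(2 ^ k * n, i) -> 2 ^ k %| i.
Proof.
case: i => [|i] // odd_bin.
have dvd_prod : 2 ^ k %| i.+1 * 'C(2 ^ k * n, i.+1).
  by rewrite -mul_bin_diag -mulnA dvdn_mulr.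
by move: dvd_prod; rewrite Gauss_dvdl // coprimeXl // coprime2n.
Qed.

Lemma dvd4_bin4_odd n i : odd 'C(4 * n, i) -> 4 %| i.
Proof. exact: (@dvdn_bin_odd 2). Qed.

(* Importing [Reals] after [ssrnat] (as [Defs] does) makes [^] denote [Nat.pow]
   on [nat]; the [Import ssrnat] above restores [expn] for this file only. *)
Lemma Nat_powE b e : Nat.pow b e = b ^ e.
Proof. by elim: e => //= e IH; rewrite expnS IH. Qed.

Lemma cE m : c m = \sum_(0 <= i < m.+1) odd 'C(m, i) * 2 ^ i.
Proof. by apply: eq_bigr => i _; rewrite modn2 Nat_powE. Qed.

Lemma c_widen m K : m < K -> c m = \sum_(0 <= i < K) odd 'C(m, i) * 2 ^ i.
Proof.
move=> ltmK; rewrite cE (big_cat_nat (leq0n m.+1) ltmK) /=.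
rewrite [X in _ + X]big1_seq ?addn0 // => i /andP [_].
by rewrite mem_iota subnKC // => /andP [/bin_small -> _].
Qed.

Lemma exp2_leq_c m : 2 ^ m <= c m.
Proof. by rewrite cE big_nat_recr //= binn mul1n leq_addl. Qed.

Section RowSupportedOnMultiplesOf4.

Variable m : nat.
Hypothesis dvd4_odd : forall i, odd 'C(m, i) -> 4 %| i.

Lemma odd_bin_addn2 i : odd 'C(m.+2, i.+2) = odd 'C(m, i.+2) + odd 'C(m, i) :> nat.
Proof.
have -> : 'C(m.+2, i.+2) = 'C(m, i.+2) + 2 * 'C(m, i.+1) + 'C(m, i).
  by rewrite !binS; lia.
rewrite oddD oddD oddM /= addbF.
case odd_i2 : (odd 'C(m, i.+2)); case odd_i : (odd 'C(m, i)) => //.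
have := dvdn_sub (dvd4_odd _ odd_i2) (dvd4_odd _ odd_i).
by rewrite subSn // subSn // subnn.
Qed.

Lemma c_addn2 : c m.+2 = 5 * c m.
Proof.
have shifted : 4 * c m = \sum_(0 <= i < m.+1) odd 'C(m, i) * 2 ^ i.+2.
  by rewrite cE big_distrr; apply: eq_bigr => i _; rewrite /= !expnS; lia.
rewrite mulSn shifted cE (@c_widen m m.+3 (leqW (leqnSn m.+1))).
rewrite !(big_nat_recl m.+2) // !(big_nat_recl m.+1) //.
under eq_bigr => i _ do rewrite odd_bin_addn2 mulnDl.
by rewrite big_split /= !bin0 !bin1; lia.
Qed.

Lemma c_mod4 : c m %% 4 = 1.
Proof.
have dvd4_tail : 4 %| \sum_(0 <= i < m) odd 'C(m, i.+1) * 2 ^ i.+1.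
  apply: dvdn_sum => i _; case odd_bin : (odd 'C(m, i.+1)); last by [].
  rewrite mul1n (@dvdn_exp2l 2 2) //.
  exact: leq_trans (dvdn_leq _ (dvd4_odd _ odd_bin)).
by rewrite cE big_nat_recl // bin0 addnC -(divnK dvd4_tail) modnMDl.
Qed.

End RowSupportedOnMultiplesOf4.

Lemma l_double_succ n : l (2 * n + 1) = 5 * l (2 * n) + 1.
Proof.
rewrite /l.
have -> : 2 * (2 * n + 1) = (4 * n).+2 by lia.
have -> : 2 * (2 * n) = 4 * n by lia.
rewrite c_addn2; last exact: dvd4_bin4_odd.
have := @c_mod4 _ (@dvd4_bin4_odd n); lia.
Qed.

Lemma leq_l_double n : n <= l (2 * n).
Proof.
rewrite /l (_ : 2 * (2 * n) = 4 * n); last by lia.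
have := leq_trans (ltn_expl (4 * n) (isT : 1 < 2)) (exp2_leq_c (4 * n)); lia.
Qed.

Section AffineRatio.
Local Open Scope R_scope.

Lemma Un_cv_affine_ratio (u v : nat -> R) (r s : R) :
  (forall n, INR n <= u n) -> (forall n, v n = r * u n + s) ->
  Un_cv (fun n => v n / u n) r.
Proof.
move=> le_n_u def_v eps eps_gt0.
have [N lt_N] := INR_unbounded (Rabs s / eps).
exists N => n le_Nn; rewrite /R_dist def_v.
have lt_s_u : Rabs s < eps * u n.
  have := le_INR _ _ le_Nn; have := le_n_u n.
  have : Rabs s / eps * eps = Rabs s by field; lra.
  nra.
have u_gt0 : 0 < u n by have := Rabs_pos s; nra.
rewrite (_ : (r * u n + s) / u n - r = s / u n); last by field; lra.
rewrite /Rdiv Rabs_mult Rabs_inv ?(Rabs_pos_eq (u n)); try lra.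
apply: (Rmult_lt_reg_r (u n)) => //.
by rewrite Rmult_assoc Rinv_l; lra.
Qed.

End AffineRatio.

Theorem mainTheorem10 :
  Un_cv (fun n : nat => (INR (l (2 * n + 1)) / INR (l (2 * n)))%R) 5%R.
Proof.
apply: (@Un_cv_affine_ratio _ _ _ 1%R) => n.
- exact/le_INR/leP/leq_l_double.
- by rewrite l_double_succ plus_INR mult_INR /=; ring.
Qed.
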